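(* If $D$ is a maximum independent set in a simple graph $G$, then $G$ has a matching that covers every vertex of $V(G)-D$. *)

From mathcomp Require Import all_boot.
Set Implicit Arguments. Unset Strict Implicit. Unset Printing Implicit Defensive.

Definition simple_graph (T : finType) (e : rel T) : Prop :=
  symmetric e /\ irreflexive e.

Definition independent (T : finType) (e : rel T) (S : {set T}) : Prop :=
  forall x y, x \in S -> y \in S -> ~~ e x y.

Definition maximum_independent (T : finType) (e : rel T) (D : {set T}) : Prop :=
  independent e D /\ forall S : {set T}, independent e S -> #|S| <= #|D|.

Definition is_matching (T : finType) (e : rel T) (M : {set {set T}}) : Prop :=
  (forall m, m \in M -> exists x y, e x y /\ m = [set x; y]) /\
  (forall m1 m2, m1 \in M -> m2 \in M -> m1 != m2 -> [disjoint m1 & m2]).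

Definition covers (T : finType) (M : {set {set T}}) (v : T) : Prop :=
  exists2 m, m \in M & v \in m.

(* Let U = V(G) - D.  If U contains an edge uv, match it and recurse on U - {u, v}.
   Otherwise U is independent, and for every S included in U the set
   S + (D - N(S)) is independent, so maximality of D gives |S| <= |N(S) /\ D|:
   Hall's condition holds and Hall's marriage theorem matches U injectively
   into D. *)
From mathcomp Require Import all_boot zify.

Set Implicit Arguments. Unset Strict Implicit. Unset Printing Implicit Defensive.

Section Hall.
Variables (T : finType) (r : rel T).

Definition neighbours (S D : {set T}) : {set T} :=
  [set d in D | [exists s in S, r s d]].

Definition hall_condition (U D : {set T}) : Prop :=
  forall S : {set T}, S \subset U -> #|S| <= #|neighbours S D|.

Definition matches_into (U D : {set T}) (f : T -> T) : Prop :=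
  [/\ {in U, forall u, f u \in D}, {in U, forall u, r u (f u)}
    & {in U &, injective f}].

Lemma neighbours_sub (S D : {set T}) : neighbours S D \subset D.
Proof. by apply/subsetP => x; rewrite inE => /andP[]. Qed.

Lemma matches_into_neighbours (U D : {set T}) (f : T -> T) :
  matches_into U D f -> matches_into U (neighbours U D) f.
Proof.
case=> fD rf fi; split=> // u uU.
by rewrite inE fD //; apply/existsP; exists u; rewrite uU rf.
Qed.

Lemma matches_into_glue (A U X D : {set T}) (f g : T -> T) : X \subset D ->
  matches_into A X f -> matches_into (U :\: A) (D :\: X) g ->
  matches_into U D (fun x => if x \in A then f x else g x).
Proof.
move=> sXD [fX rf fi] [gD rg gi].
have UA x : x \in U -> x \notin A -> x \in U :\: A by rewrite inE => -> ->.
have gX x : x \in U -> x \notin A -> g x \notin X.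
  by move=> xU xA; have := gD x (UA x xU xA); rewrite inE => /andP[].
split=> [x xU | x xU | x y xU yU].
- case: ifP => xA; first exact: (subsetP sXD) (fX x xA).
  by have := gD x (UA x xU (negbT xA)); rewrite inE => /andP[].
- by case: ifP => xA; [apply: rf | apply: rg; apply: UA => //; rewrite xA].
case: ifP => xA; case: ifP => yA.
- exact: fi.
- by move=> fxgy; have := gX y yU (negbT yA); rewrite -fxgy fX.
- by move=> gxfy; have := gX x xU (negbT xA); rewrite gxfy fX.
- by apply: gi; apply: UA => //; rewrite ?xA ?yA.
Qed.

Lemma hall_condition_tightD (U D S : {set T}) :
  hall_condition U D -> S \subset U -> #|neighbours S D| <= #|S| ->
  hall_condition (U :\: S) (D :\: neighbours S D).
Proof.
move=> hallU sSU tight S' sS'.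
have sS'U : S' \subset U by apply: subset_trans sS' (subsetDl U S).
have disjSS' : S :&: S' = set0.
  apply/setP => x; rewrite !inE; apply/andP => -[xS xS'].
  by have := subsetP sS' x xS'; rewrite inE xS.
have sN : neighbours (S :|: S') D \subset
          neighbours S D :|: neighbours S' (D :\: neighbours S D).
  apply/subsetP => x; rewrite inE => /andP[xD /existsP[s /andP[sSS' rsx]]].
  rewrite in_setU; case: (boolP (x \in neighbours S D)) => //= xN.
  rewrite [x \in neighbours S' _]inE in_setD xN xD /=.
  apply/existsP; exists s; rewrite rsx andbT.
  case/setUP: sSS' => // sS; move/negP: xN; case.
  by rewrite inE xD; apply/existsP; exists s; rewrite sS.
have := hallU (S :|: S'); rewrite subUset sSU sS'U => /(_ isT).
rewrite cardsU disjSS' cards0; have := subset_leq_card sN.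
have := cardsU (neighbours S D) (neighbours S' (D :\: neighbours S D)).
lia.
Qed.

Lemma hall_condition_surplusD1 (U D : {set T}) (u d : T) :
  (forall S : {set T}, S \proper U -> S != set0 -> #|S| < #|neighbours S D|) ->
  u \in U -> hall_condition (U :\ u) (D :\ d).
Proof.
move=> surplus uU S sS; have [-> | S0] := eqVneq S set0; first by rewrite cards0.
have pSU : S \proper U := sub_proper_trans sS (properD1 uU).
have sN : neighbours S D \subset d |: neighbours S (D :\ d).
  apply/subsetP => x; rewrite !inE => /andP[xD ->].
  by rewrite xD andbT; case: eqP.
have := surplus S pSU S0; have := subset_leq_card sN.
have := cardsU1 d (neighbours S (D :\ d)); lia.
Qed.

Theorem Hall_marriage (U D : {set T}) :
  hall_condition U D -> exists f, matches_into U D f.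
Proof.
have [n] := ubnP #|U|; elim: n U D => // n IH U D /ltnSE cardU hallU.
case: (boolP [exists S : {set T},
                [&& S \proper U, S != set0 & #|neighbours S D| <= #|S|]]).
  case/existsP=> S /and3P[pSU S0 tight]; have sSU := proper_sub pSU.
  have [f fS] : exists f, matches_into S D f.
    apply: IH => [|S' sS']; first by have := proper_card pSU; lia.
    exact/hallU/(subset_trans sS').
  have [g gR] : exists g, matches_into (U :\: S) (D :\: neighbours S D) g.
    apply: IH; last exact: hall_condition_tightD.
    have cardS_gt0 : 0 < #|S| by rewrite card_gt0.
    by rewrite cardsDS //; have := subset_leq_card sSU; lia.
  exists (fun x => if x \in S then f x else g x).
  by apply: matches_into_glue (neighbours_sub S D) _ gR; apply: matches_into_neighbours.
rewrite negb_exists => /forallP noTight.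
have surplus (S : {set T}) : S \proper U -> S != set0 -> #|S| < #|neighbours S D|.
  by move=> pSU S0; have := noTight S; rewrite pSU S0 /=; lia.
have [-> | [u uU]] := set_0Vmem U; first by exists id; split=> ?; rewrite inE.
have [d] : exists d, d \in neighbours [set u] D.
  apply/set0Pn; rewrite -card_gt0.
  by have := hallU [set u]; rewrite cards1 sub1set uU; apply.
rewrite inE => /andP[dD /existsP[s /andP[/set1P -> rud]]].
have [g gR] : exists g, matches_into (U :\ u) (D :\ d) g.
  apply: IH; last exact: hall_condition_surplusD1.
  by have := cardsD1 u U; rewrite uU; lia.
exists (fun x => if x \in [set u] then d else g x).
apply: matches_into_glue gR; first by rewrite sub1set.
by split=> [x _ | x /set1P -> | x y /set1P -> /set1P ->]; rewrite ?set11.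
Qed.

End Hall.

Section Matching.
Variables (T : finType) (e : rel T).

Lemma matching_setU1 (M : {set {set T}}) (u v : T) : is_matching e M -> e u v ->
  {in M, forall m : {set T}, u \notin m /\ v \notin m} -> is_matching e ([set u; v] |: M).
Proof.
move=> [edgeM disjM] euv fresh; split=> [m | m1 m2].
  by case/setU1P => [-> | /edgeM //]; exists u, v.
have disj_uv m : m \in M -> [disjoint [set u; v] & m].
  move=> mM; have [um vm] := fresh m mM.
  by rewrite disjoints_subset subUset !sub1set !inE um vm.
case/setU1P => [-> | m1M] /setU1P[-> | m2M]; rewrite ?eqxx //.
- by move=> _; apply: disj_uv.
- by move=> _; rewrite disjoint_sym; apply: disj_uv.
- exact: disjM.
Qed.

Lemma edge_or_independent (U : {set T}) :
  (exists u v, [/\ u \in U, v \in U & e u v]) \/ independent e U.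
Proof.
case: (boolP [exists u in U, exists v in U, e u v]) => [|noEdge].
  by case/existsP=> u /andP[uU /existsP[v /andP[vU euv]]]; left; exists u, v.
right=> x y xU yU; apply: contraNN noEdge => exy.
by apply/existsP; exists x; rewrite xU; apply/existsP; exists y; rewrite yU.
Qed.

Lemma maximum_independent_hall_condition (D U : {set T}) :
  symmetric e -> maximum_independent e D -> independent e U ->
  [disjoint U & D] -> hall_condition e U D.
Proof.
move=> esym [indD maxD] indU disjUD S sSU; set N := neighbours e S D.
have indI : independent e (S :|: (D :\: N)).
  have SDN x y : x \in S -> y \in D :\: N -> ~~ e x y.
    move=> xS; rewrite inE => /andP[yN yD]; apply: contra yN => exy.
    by rewrite inE yD; apply/existsP; exists x; rewrite xS.
  move=> x y /setUP[xS | xD] /setUP[yS | yD].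
  - exact: indU (subsetP sSU x xS) (subsetP sSU y yS).
  - exact: SDN.
  - by rewrite esym; apply: SDN.
  - by apply: indD; [move: xD | move: yD]; rewrite inE => /andP[].
have disjSD : S :&: (D :\: N) = set0.
  exact/disjoint_setI0/(disjointWl sSU)/(disjointWr (subsetDl D N)).
have := maxD _ indI; rewrite cardsU disjSD cards0 cardsDS ?neighbours_sub //.
by have := subset_leq_card (neighbours_sub e S D); lia.
Qed.

Definition covering_matching (U D : {set T}) (M : {set {set T}}) : Prop :=
  [/\ is_matching e M, {in M, forall m : {set T}, m \subset U :|: D}
    & {in U, forall v : T, covers M v}].

Lemma covering_matching_setU1 (U D : {set T}) (M : {set {set T}}) (u v : T) :
  [disjoint U & D] -> u \in U -> v \in U -> e u v ->
  covering_matching (U :\ u :\ v) D M -> covering_matching U D ([set u; v] |: M).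
Proof.
move=> disjUD uU vU euv [matchM subM covM].
have sU'U : U :\ u :\ v \subset U by apply: subset_trans (subsetDl _ _) (subsetDl _ _).
have fresh w : w \in U -> (w == u) || (w == v) -> {in M, forall m : {set T}, w \notin m}.
  move=> wU wuv m /subM/subsetP/(_ w)/contra; apply.
  rewrite !inE (disjointFr disjUD wU) orbF.
  by case/orP: wuv => /eqP ->; rewrite eqxx ?andbF.
split.
- by apply: matching_setU1 => // m mM; split; apply: fresh; rewrite ?eqxx ?orbT.
- move=> m /setU1P[-> | /subM sm]; first by rewrite subUset !sub1set !inE uU vU.
  exact: subset_trans sm (setSU D sU'U).
- move=> w wU; case: (boolP (w \in [set u; v])) => wuv.
    by exists [set u; v]; rewrite ?setU11.
  have [|m mM wm] := covM w; last by exists m; rewrite ?setU1r.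
  by move: wuv; rewrite !inE negb_or => /andP[-> ->].
Qed.

Lemma covering_matching_image (U D : {set T}) (f : T -> T) :
  [disjoint U & D] -> matches_into e U D f ->
  covering_matching U D [set [set u; f u] | u in U].
Proof.
move=> disjUD [fD ef fi].
split=> [| m /imsetP[u uU ->] | u uU].
- split=> [m /imsetP[u uU ->] | m1 m2 /imsetP[u1 u1U ->] /imsetP[u2 u2U ->] ne12].
    by exists u, (f u); rewrite ef.
  have u12 : u1 != u2 by apply: contraNneq ne12 => ->.
  rewrite -setI_eq0; apply/eqP/setP => x; rewrite !inE.
  apply/negP => /andP[/orP[] /eqP -> /orP[] /eqP].
  + by apply/eqP.
  + by move=> u1E; have := disjointFr disjUD u1U; rewrite u1E fD.
  + by move=> fE; have := disjointFr disjUD u2U; rewrite -fE fD.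
  + by move/(fi _ _ u1U u2U)/eqP; apply/negP.
- by rewrite subUset !sub1set !inE uU (fD u uU) orbT.
- by exists [set u; f u]; [apply: imset_f | rewrite set21].
Qed.

End Matching.

Lemma covering_matching_exists (T : finType) (e : rel T) (D U : {set T}) :
  simple_graph e -> maximum_independent e D -> [disjoint U & D] ->
  exists M, covering_matching e U D M.
Proof.
move=> [esym eirr] maxD; have [n] := ubnP #|U|.
elim: n U => // n IH U /ltnSE cardU disjUD.
have [[u [v [uU vU euv]]] | indU] := edge_or_independent e U.
- have uv : u != v by apply: contraTneq euv => ->; rewrite eirr.
  have sU'U : U :\ u :\ v \subset U by apply: subset_trans (subsetDl _ _) (subsetDl _ _).
  have [M covM] : exists M, covering_matching e (U :\ u :\ v) D M.
    apply: IH; last exact: disjointWl sU'U disjUD.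
    have := cardsD1 u U; have := cardsD1 v (U :\ u).
    by rewrite uU !inE eq_sym uv vU; lia.
  by exists ([set u; v] |: M); apply: covering_matching_setU1.
- have hallU := maximum_independent_hall_condition esym maxD indU disjUD.
  have [f fR] := Hall_marriage hallU.
  by exists [set [set u; f u] | u in U]; apply: covering_matching_image.
Qed.

Theorem mainTheorem10 (T : finType) (e : rel T) (D : {set T}) :
  simple_graph e -> maximum_independent e D ->
  exists M : {set {set T}}, is_matching e M /\
    (forall v, v \notin D -> covers M v).
Proof.
move=> simple maxD.
have disjCD : [disjoint ~: D & D] by rewrite disjoints_subset.
have [M [matchM _ covM]] := covering_matching_exists simple maxD disjCD.
by exists M; split=> // v vD; apply: covM; rewrite inE.
Qed.
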